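(* There is a constant $C>0$ such that for all $n\ge 2$ and $k\ge1$: if $\mathbf M\in\mathrm{GL}(n,2)$ equals a product $\mathbf M_{\mathcal T_k}\cdots\mathbf M_{\mathcal T_1}$ of $k$ CNOT-tree matrices, each on $n$ qubits, then $\mathbf M$ is a product of at most $Ck\log^2 n$ parallel row-elimination matrices. That is, the circuit can be parallelized to depth $O(k\log^2 n)$ without ancillae.
   Context: $\mathsf R(i,j)=\mathbf I+\mathbf 1_{j,i}$ over $\mathbb F_2$, where $\mathbf 1_{j,i}$ is the matrix with a single $1$ in entry $(j,i)$. A parallel row-elimination matrix is $\mathbf I$ or $\mathbf I+\sum_{k=1}^t\mathbf 1_{j_k,i_k}$, where the $2t$ indices $i_k,j_k$ are pairwise distinct. A CNOT-tree matrix $\mathbf M_{\mathcal T}$ is defined for a proper binary tree $\mathcal T$ with $n$ leaves carrying distinct labels from $[n]$ and internal nodes labeled $L$ or $R$. Each node $v$ receives a qubit index $i(v)$, and each internal node $v$ a matrix $\mathbf M_v$, as follows. Write $c_L,c_R$ for the left and right children of $v$. - If $v$ is a leaf, $i(v)$ is its label. - If $v$ is internal with label $L$, then $i(v)=i(c_L)$ and $\mathbf M_v=\mathsf R(i(c_R),i(c_L))$. - If $v$ is internal with label $R$, then $i(v)=i(c_R)$ and $\mathbf M_v=\mathsf R(i(c_L),i(c_R))$. Then $\mathbf M_{\mathcal T}=\mathbf M_{v_{n-1}}\cdots\mathbf M_{v_1}$, where $v_1,\dots,v_{n-1}$ are the internal nodes in postorder. *)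

From HB Require Import structures.
From mathcomp Require Import all_boot all_order all_algebra.
From Stdlib Require Import Reals.

Set Implicit Arguments.
Unset Strict Implicit.
Unset Printing Implicit Defensive.

Import GRing.Theory.
Local Open Scope ring_scope.

Inductive lr := LabL | LabR.

Inductive tree (n : nat) :=
  | Leaf of 'I_n
  | Node of lr & tree n & tree n.

Arguments Leaf {n}.
Arguments Node {n}.

Fixpoint leaves n (t : tree n) : seq 'I_n :=
  match t with
  | Leaf l => [:: l]
  | Node _ a b => leaves a ++ leaves b
  end.

Definition valid_tree n (t : tree n) : bool :=
  (size (leaves t) == n) && uniq (leaves t).

Definition Rmx n (i j : 'I_n) : 'M['F_2]_n := 1%:M + delta_mx j i.

Fixpoint qidx n (t : tree n) : 'I_n :=
  match t with
  | Leaf l => l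
  | Node LabL a _ => qidx a
  | Node LabR _ b => qidx b
  end.

(* M_T = M_{v_{n-1}} ... M_{v_1}, internal nodes in postorder
   (left subtree, right subtree, root), so M_{Node} = M_v * M_right * M_left. *)
Fixpoint tree_mx n (t : tree n) : 'M['F_2]_n :=
  match t with
  | Leaf _ => 1%:M
  | Node LabL a b => Rmx (qidx b) (qidx a) *m tree_mx b *m tree_mx a
  | Node LabR a b => Rmx (qidx a) (qidx b) *m tree_mx b *m tree_mx a
  end.

(* Parallel row-elimination matrix: I + sum_k 1_{j_k,i_k} with all 2t indices
   pairwise distinct (t = 0 gives I).  A pair p encodes (i_k, j_k) = (p.1, p.2). *)
Definition parallel_elim n (A : 'M['F_2]_n) : Prop :=
  exists s : seq ('I_n * 'I_n),
    uniq (flatten [seq [:: p.1; p.2] | p <- s]) /\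
    A = 1%:M + \sum_(p <- s) delta_mx p.2 p.1.

Definition mxprod n (s : seq 'M['F_2]_n) : 'M['F_2]_n := foldr mulmx 1%:M s.

From HB Require Import structures.
From mathcomp Require Import all_boot all_order all_algebra.
From mathcomp Require Import zify ring.

(* We work with the action of matrices on column vectors x : F_2^n.  A CNOT
   gate (c, t) adds x_c to x_t; a *layer* is a list of gates whose 2t qubits
   are pairwise distinct, and its matrix is exactly a parallel row-elimination
   matrix.  A *circuit* is a list of layers; its depth is its length.

   1. Basic calculus: qubit supports, commutation of maps acting on disjoint
      qubits, and parallel composition [par_circ] of circuits on disjoint
      qubits (depth = max of depths).
   2. Prefix sums: a list of L <= 2^e distinct qubits can be replaced by its
      prefix sums with a circuit of depth 2e (a Ladner-Fischer style
      recursion on the odd positions).  Running it backwards and combining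
      two such circuits gives a "fan-in" x_h += sum_{m in M} x_m of depth 4e.
   3. Trees: the heavy-path decomposition of a CNOT tree writes its action as
      independent smaller off-path subtrees (each with at most half the
      leaves), followed by a chain of fan-in blocks along the heavy path,
      which is realized by simultaneous fan-ins and one prefix-sum circuit in
      depth 6e.  Recursion gives depth 3e(e+1) for a tree with <= 2^e leaves.
   4. With e = up_log 2 n, translating circuits to matrices and bounding
      3e(e+1) <= 100 ln^2 n proves the corollary with C = 100. *)

Set Implicit Arguments.
Unset Strict Implicit.
Unset Printing Implicit Defensive.
Import GRing.Theory.
Local Open Scope ring_scope.

Section Circuits.
Variable n : nat.

(* States of n qubits, and CNOT gates (control, target). *)
Definition vec := {ffun 'I_n -> 'F_2}.
Definition gate := ('I_n * 'I_n)%type.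
Implicit Types (x y : vec) (L : seq gate) (q : 'I_n).

Definition apply_layer L x : vec :=
  [ffun q => x q + \sum_(g <- L | g.2 == q) x g.1].

Definition layer_qubits L : seq 'I_n := flatten [seq [:: g.1; g.2] | g <- L].

Definition run (C : seq (seq gate)) x : vec := foldl (fun y L => apply_layer L y) x C.
Definition circ_qubits (C : seq (seq gate)) : seq 'I_n := flatten (map layer_qubits C).

Definition parallel_circ (C : seq (seq gate)) := all (fun L => uniq (layer_qubits L)) C.

Definition acts_on (f : vec -> vec) (S : seq 'I_n) :=
  (forall x q, q \notin S -> f x q = x q) /\
  (forall x y, (forall q, q \in S -> x q = y q) -> forall q, q \in S -> f x q = f y q).

Definition disjoint_qubits (S1 S2 : seq 'I_n) := forall q, q \in S1 -> q \notin S2.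

Lemma disjoint_qubits_sym S1 S2 : disjoint_qubits S1 S2 -> disjoint_qubits S2 S1.
Proof. by move=> D q q2; apply/negP => /D; rewrite q2. Qed.

Lemma acts_on_comm f g S1 S2 x :
  acts_on f S1 -> acts_on g S2 -> disjoint_qubits S1 S2 -> f (g x) = g (f x).
Proof.
move=> [f_out f_in] [g_out g_in] D; apply/ffunP => q.
case: (boolP (q \in S1)) => q1.
  rewrite (g_out _ _ (D _ q1)); apply: f_in => // r r1; exact: g_out (D _ r1).
case: (boolP (q \in S2)) => q2.
  rewrite (f_out _ _ q1); apply: g_in => // r r2; symmetry; apply: f_out.
  by apply/negP => /D; rewrite r2.
by rewrite (f_out _ _ q1) !(g_out _ _ q2) (f_out _ _ q1).
Qed.

Lemma acts_on_sub f S S' : acts_on f S -> {subset S <= S'} -> acts_on f S'.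
Proof.
move=> [f_out f_in] sub; split.
  by move=> x q qn; apply: f_out; apply: contra qn; apply: sub.
move=> x y e q q'; case: (boolP (q \in S)) => qS.
  by apply: f_in => // r rS; apply: e; apply: sub.
by rewrite !f_out // e.
Qed.

Lemma acts_on_comp f g S : acts_on f S -> acts_on g S -> acts_on (f \o g) S.
Proof.
move=> [f_out f_in] [g_out g_in]; split; first by move=> x q qn /=; rewrite f_out // g_out.
by move=> x y e q qS; apply: f_in => // r rS; apply: g_in.
Qed.

Lemma acts_on_id S : acts_on id S.
Proof. by split => // x y e q; apply: e. Qed.

Lemma layer_qubits_cons g L : layer_qubits (g :: L) = g.1 :: g.2 :: layer_qubits L.
Proof. by []. Qed.

Lemma layer_qubits_cat L1 L2 : layer_qubits (L1 ++ L2) = layer_qubits L1 ++ layer_qubits L2.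
Proof. by rewrite /layer_qubits map_cat flatten_cat. Qed.

Lemma mem_layer_qubits L g : g \in L -> (g.1 \in layer_qubits L) && (g.2 \in layer_qubits L).
Proof.
elim: L => //= h L IH; rewrite inE => /orP [/eqP -> | /IH /andP [g1 g2]].
  by rewrite !inE !eqxx orbT.
by rewrite !inE g1 g2 !orbT.
Qed.

Lemma apply_layer_acts_on L : acts_on (apply_layer L) (layer_qubits L).
Proof.
split => [x q qn | x y e q qS].
  rewrite ffunE big_seq_cond big1 ?addr0 // => g /andP [gL /eqP e].
  by move: qn; rewrite -e; case/andP: (mem_layer_qubits gL) => _ ->.
rewrite !ffunE e //; congr (_ + _).
rewrite big_seq_cond [in RHS]big_seq_cond; apply: eq_bigr => g /andP [gL _].
by apply: e; case/andP: (mem_layer_qubits gL).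
Qed.

Lemma gate_acts_on (g : gate) S : g.1 \in S -> g.2 \in S -> acts_on (apply_layer [:: g]) S.
Proof.
move=> g1 g2; apply: acts_on_sub (apply_layer_acts_on _) _ => q.
by rewrite layer_qubits_cons !inE => /orP [] /eqP ->.
Qed.

Lemma run_cons L C x : run (L :: C) x = run C (apply_layer L x).
Proof. by []. Qed.

Lemma run_cat C1 C2 x : run (C1 ++ C2) x = run C2 (run C1 x).
Proof. by rewrite /run foldl_cat. Qed.

Lemma circ_qubits_cons L C : circ_qubits (L :: C) = layer_qubits L ++ circ_qubits C.
Proof. by []. Qed.

Lemma circ_qubits_cat C1 C2 : circ_qubits (C1 ++ C2) = circ_qubits C1 ++ circ_qubits C2.
Proof. by rewrite /circ_qubits map_cat flatten_cat. Qed.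

Lemma run_acts_on C : acts_on (run C) (circ_qubits C).
Proof.
elim: C => [|L C IH]; first exact: acts_on_id.
apply: (@acts_on_comp (run C) (apply_layer L)).
  by apply: acts_on_sub IH _ => q; rewrite mem_cat => ->; rewrite orbT.
by apply: acts_on_sub (apply_layer_acts_on L) _ => q; rewrite mem_cat => ->.
Qed.

Lemma apply_layer_cat L1 L2 x : disjoint_qubits (layer_qubits L1) (layer_qubits L2) ->
  apply_layer (L1 ++ L2) x = apply_layer L2 (apply_layer L1 x).
Proof.
move=> D; apply/ffunP => q; rewrite !ffunE big_cat /= addrA; congr (_ + _).
rewrite big_seq_cond [in RHS]big_seq_cond; apply: eq_bigr => g /andP [gL2 _].
case/andP: (mem_layer_qubits gL2) => g1 _.
case: (apply_layer_acts_on L1) => out _; rewrite out //.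
by apply/negP => /D; rewrite g1.
Qed.

Fixpoint par_circ (A B : seq (seq gate)) : seq (seq gate) :=
  match A, B with
  | a :: A', b :: B' => (a ++ b) :: par_circ A' B'
  | [::], _ => B
  | _, [::] => A
  end.

Lemma size_par_circ A B : size (par_circ A B) = maxn (size A) (size B).
Proof.
elim: A B => [|a A IH] [|b B] //=; rewrite ?maxn0 ?max0n //.
by rewrite IH maxnSS.
Qed.

Lemma circ_qubits_par A B q :
  (q \in circ_qubits (par_circ A B)) = (q \in circ_qubits A) || (q \in circ_qubits B).
Proof.
elim: A B => [|a A IH] [|b B] //=; rewrite ?orbF //.
rewrite !mem_cat layer_qubits_cat mem_cat -/(circ_qubits _) IH.
by case: (q \in layer_qubits a); case: (q \in layer_qubits b); rewrite /= ?orbT ?orbF.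
Qed.

Lemma disjoint_qubits_catl (a A B : seq 'I_n) :
  disjoint_qubits (a ++ A) B -> disjoint_qubits a B /\ disjoint_qubits A B.
Proof. by move=> D; split => q qa; apply: D; rewrite mem_cat qa ?orbT. Qed.

Lemma disjoint_qubits_catr (A b B : seq 'I_n) :
  disjoint_qubits A (b ++ B) -> disjoint_qubits A b /\ disjoint_qubits A B.
Proof. by move=> D; split => q qa; move: (D q qa); rewrite mem_cat negb_or => /andP []. Qed.

Lemma run_par_circ A B x : disjoint_qubits (circ_qubits A) (circ_qubits B) ->
  run (par_circ A B) x = run B (run A x).
Proof.
elim: A B x => [|a A IH] [|b B] x //= D.
case/disjoint_qubits_catl: D => /disjoint_qubits_catr [Dab DaB] /disjoint_qubits_catr [DAb DAB].
rewrite apply_layer_cat // IH //; congr (run B _).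
apply: (acts_on_comm _ (run_acts_on A) (apply_layer_acts_on b) DAb).
Qed.

Lemma parallel_par_circ A B : parallel_circ A -> parallel_circ B ->
  disjoint_qubits (circ_qubits A) (circ_qubits B) -> parallel_circ (par_circ A B).
Proof.
elim: A B => [|a A IH] [|b B] //= /andP [ua vA] /andP [ub vB] D.
case/disjoint_qubits_catl: D => /disjoint_qubits_catr [Dab DaB] /disjoint_qubits_catr [DAb DAB].
rewrite IH // andbT layer_qubits_cat cat_uniq ua ub /= andbT.
by apply/hasPn => q qb; apply/negP => /Dab; rewrite qb.
Qed.

(* Over F_2 a parallel layer is an involution, since no control is a target. *)
Lemma control_not_target L g g' : uniq (layer_qubits L) -> g \in L -> g' \in L -> g.1 != g'.2.
Proof.
elim: L => // h L IH; rewrite layer_qubits_cons /= !inE.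
move=> /and3P [/norP [h12 h1L] h2L uL] /orP [/eqP -> | gL] /orP [/eqP -> | g'L] //.
- by apply/eqP => e; move: h1L; rewrite e; case/andP: (mem_layer_qubits g'L) => _ ->.
- by apply/eqP => e; move: h2L; rewrite -e; case/andP: (mem_layer_qubits gL) => ->.
- exact: IH.
Qed.

Lemma apply_layerK L x : uniq (layer_qubits L) -> apply_layer L (apply_layer L x) = x.
Proof.
move=> u; apply/ffunP => q; rewrite !ffunE -addrA; set S := \sum_(_ <- _ | _) _.
rewrite (_ : \sum_(g <- L | g.2 == q) apply_layer L x g.1 = S).
  by rewrite addrr_pchar2 ?addr0 // (pchar_Fp (isT : prime 2)).
rewrite /S big_seq_cond [in RHS]big_seq_cond; apply: eq_bigr => g /andP [gL _].
rewrite ffunE big_seq_cond big1 ?addr0 // => g' /andP [g'L /eqP e].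
by move: (control_not_target u gL g'L); rewrite e eqxx.
Qed.

Lemma circ_qubits_rev C q : (q \in circ_qubits (rev C)) = (q \in circ_qubits C).
Proof.
by rewrite /circ_qubits map_rev; apply/flattenP/flattenP => [] [s];
  rewrite ?mem_rev => ??; exists s; rewrite ?mem_rev.
Qed.

Lemma parallel_circ_rev C : parallel_circ (rev C) = parallel_circ C.
Proof. by rewrite /parallel_circ all_rev. Qed.

Lemma run_revK C x : parallel_circ C -> run (rev C) (run C x) = x.
Proof.
elim: C x => //= L C IH x /andP [uL vC].
by rewrite rev_cons -cats1 run_cat IH //= apply_layerK.
Qed.

End Circuits.

Lemma sum_iota_pred1 (R : nmodType) K m (F : nat -> R) : (m < K)%N ->
  \sum_(k <- iota 0 K | k == m) F k = F m.
Proof.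
by move=> mK; rewrite -big_filter filter_pred1_uniq ?iota_uniq ?mem_iota // big_seq1.
Qed.

Lemma sum_pairs (R : nmodType) (F : nat -> R) m :
  \sum_(j < m) (F (j * 2 + 1)%N + F (j * 2)%N) = \sum_(j < m * 2) F j.
Proof.
elim: m => [|m IH]; first by rewrite !big_ord0.
rewrite big_ord_recr /= IH (_ : (m.+1 * 2 = (m * 2).+2)%N); last lia.
by rewrite !big_ord_recr /= addn1 -addrA [F _ + F _]addrC.
Qed.

Section PrefixSums.
Variable n : nat.
Implicit Types (x y : vec n) (q : 'I_n) (a : nat -> 'I_n).

Definition injective_below L a :=
  forall i j, (i < L)%N -> (j < L)%N -> a i = a j -> i = j.

Definition pair_layer a c K : seq (gate n) :=
  [seq (a (c + k * 2)%N, a (c + k * 2 + 1)%N) | k <- iota 0 K].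

(* Prefix-sum circuit on a(0), ..., a(L-1): add each even position into the
   next odd one, recurse on the odd positions, then add each odd position
   into the next even one.  [e] bounds the recursion depth. *)
Fixpoint prefix_circ e L a : seq (seq (gate n)) :=
  match e with
  | 0 => [::]
  | e'.+1 =>
    if (L <= 1)%N then [::] else
      pair_layer a 0 (L %/ 2)%N :: prefix_circ e' (L %/ 2)%N (fun k => a (k * 2 + 1)%N)
        ++ [:: pair_layer a 1 ((L - 1) %/ 2)%N]
  end.

Lemma layer_qubits_pair_layer a c K :
  layer_qubits (pair_layer a c K) = [seq a i | i <- iota c (K * 2)].
Proof.
elim: K => [|K IH] //.
rewrite /pair_layer (_ : iota 0 K.+1 = iota 0 K ++ [:: K]); last by rewrite -addn1 iotaD.
rewrite map_cat -/(pair_layer a c K) layer_qubits_cat IH.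
rewrite (_ : (K.+1 * 2 = K * 2 + 2)%N) ?iotaD ?map_cat; last lia.
by rewrite /= /layer_qubits /= addn1.
Qed.

Lemma uniq_pair_layer a c K L : injective_below L a -> (c + K * 2 <= L)%N ->
  uniq (layer_qubits (pair_layer a c K)).
Proof.
move=> ia cK; rewrite layer_qubits_pair_layer map_inj_in_uniq ?iota_uniq // => i j.
by rewrite !mem_iota => ? ?; apply: ia; lia.
Qed.

Lemma pair_layer_at a c K L x i : injective_below L a -> (c + K * 2 <= L)%N -> (i < L)%N ->
  apply_layer (pair_layer a c K) x (a i) =
  x (a i) + \sum_(k <- iota 0 K | (c + k * 2 + 1 == i)%N) x (a (c + k * 2)%N).
Proof.
move=> ia cK iL; rewrite ffunE big_map; congr (_ + _).
rewrite big_seq_cond [in RHS]big_seq_cond; apply: eq_bigl => k /=.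
case kK: (k \in iota 0 K) => //=; move: kK; rewrite mem_iota => kK.
by apply/eqP/eqP => [/ia | ->] //; apply; lia.
Qed.

Lemma pair_layer_target a c K L x m : injective_below L a -> (c + K * 2 <= L)%N -> (m < K)%N ->
  apply_layer (pair_layer a c K) x (a (c + m * 2 + 1)%N) =
  x (a (c + m * 2 + 1)%N) + x (a (c + m * 2)%N).
Proof.
move=> ia cK mK; rewrite (pair_layer_at _ ia cK); last lia.
by rewrite (eq_bigl (fun k => k == m)) ?sum_iota_pred1 // => k; apply/eqP/eqP; lia.
Qed.

Lemma pair_layer_fixed a c K L x i : injective_below L a -> (c + K * 2 <= L)%N -> (i < L)%N ->
  (forall m, (m < K)%N -> (c + m * 2 + 1 != i)%N) ->
  apply_layer (pair_layer a c K) x (a i) = x (a i).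
Proof.
move=> ia cK iL hi; rewrite (pair_layer_at _ ia cK iL) big_seq_cond big1 ?addr0 //.
move=> k /andP [kK /eqP e]; have kK' : (k < K)%N by rewrite mem_iota in kK; lia.
by move: (hi k kK'); rewrite e eqxx.
Qed.

Lemma size_prefix_circ e L a : (size (prefix_circ e L a) <= e.*2)%N.
Proof.
elim: e L a => //= e IH L a; case: (L <= 1)%N => //=.
by rewrite size_cat /= addn1 doubleS ltnS; apply: leq_trans (IH _ _) _; lia.
Qed.

Lemma circ_qubits_prefix_circ e L a q : q \in circ_qubits (prefix_circ e L a) ->
  exists2 i, (i < L)%N & q = a i.
Proof.
elim: e L a => //= e IH L a; case: (L <= 1)%N => // qC.
rewrite circ_qubits_cons circ_qubits_cat !mem_cat in_nil orbF in qC.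
rewrite !layer_qubits_pair_layer in qC.
case/or3P: qC => [/mapP [i] | /IH [i iL ->] | /mapP [i]].
- by rewrite mem_iota => ? ->; exists i => //; lia.
- by exists (i * 2 + 1)%N => //; lia.
- by rewrite mem_iota => ? ->; exists i => //; lia.
Qed.

Lemma injective_below_odd L a : injective_below L a ->
  injective_below (L %/ 2)%N (fun k => a (k * 2 + 1)%N).
Proof.
move=> ia i j ? ? /ia h; have : (i * 2 + 1 = j * 2 + 1)%N by apply: h; lia.
lia.
Qed.

Lemma parallel_prefix_circ e L a : injective_below L a -> parallel_circ (prefix_circ e L a).
Proof.
elim: e L a => //= e IH L a ia; case: (leqP L 1) => //= L1.
rewrite /parallel_circ /= all_cat /= -/(parallel_circ _) IH; last exact: injective_below_odd.
by rewrite (@uniq_pair_layer a 0 (L %/ 2)%N L) ?(@uniq_pair_layer a 1 ((L - 1) %/ 2)%N L) //; lia.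
Qed.

Lemma prefix_circ_out e L a x q : (forall i, (i < L)%N -> a i != q) ->
  run (prefix_circ e L a) x q = x q.
Proof.
move=> hq; case: (run_acts_on (prefix_circ e L a)) => out _; apply: out.
by apply/negP => /circ_qubits_prefix_circ [i iL e']; move: (hq i iL); rewrite e' eqxx.
Qed.

Lemma prefix_circ_spec e L a x : (L <= 2 ^ e)%N -> injective_below L a ->
  forall i, (i < L)%N -> run (prefix_circ e L a) x (a i) = \sum_(j < i.+1) x (a j).
Proof.
elim: e L a x => [|e IH] L a x /= Le ia i iL.
  have -> : i = 0%N by move: Le; rewrite expn0; lia.
  by rewrite big_ord1.
case: (leqP L 1) => L1.
  have -> : i = 0%N by lia.
  by rewrite big_ord1.
rewrite run_cons run_cat /=.
set y := apply_layer _ x; set a' := fun k => a (k * 2 + 1)%N.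
set z := run (prefix_circ e (L %/ 2)%N a') y.
have cK0 : (0 + (L %/ 2)%N * 2 <= L)%N by lia.
have cK1 : (1 + ((L - 1) %/ 2)%N * 2 <= L)%N by lia.
have y_even m : (m * 2 < L)%N -> y (a (m * 2)%N) = x (a (m * 2)%N).
  by move=> mL; apply: (pair_layer_fixed _ ia) => // k kK; lia.
have z_odd m : (m < (L %/ 2)%N)%N -> z (a' m) = \sum_(j < m.+1 * 2) x (a j).
  move=> mK; rewrite (IH _ _ _ _ (injective_below_odd ia)) //; last by move: Le; rewrite expnS; lia.
  rewrite -(sum_pairs (fun j => x (a j))); apply: eq_bigr => j _.
  by rewrite /a' -{1}[(j * 2)%N]add0n (pair_layer_target _ ia cK0) //; move: (ltn_ord j); lia.
have z_even m : (m * 2 < L)%N -> z (a (m * 2)%N) = x (a (m * 2)%N).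
  move=> mL; rewrite /z prefix_circ_out ?y_even // => j jK; apply/eqP => /ia h.
  have : (j * 2 + 1 = m * 2)%N by apply: h; lia.
  lia.
have [m [ei | ei]] : exists m, i = (m * 2)%N \/ i = (m * 2 + 1)%N by exists (i %/ 2)%N; lia.
all: subst i.
- case: m iL => [|m] iL.
    rewrite (pair_layer_fixed _ ia cK1); [| lia | by move=> k _; lia].
    by rewrite z_even ?big_ord1 //; lia.
  rewrite (_ : (m.+1 * 2 = 1 + m * 2 + 1)%N); last lia.
  rewrite (pair_layer_target _ ia cK1); last lia.
  rewrite (_ : (1 + m * 2 + 1 = m.+1 * 2)%N) ?z_even; last lia; last lia.
  by rewrite (_ : (1 + m * 2 = m * 2 + 1)%N) ?z_odd ?[RHS]big_ord_recr /= 1?addrC //; lia.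
- rewrite (pair_layer_fixed _ ia cK1) //; last by move=> k _; lia.
  by rewrite z_odd ?addn1 //; lia.
Qed.

Definition prefix_sums (l : seq 'I_n) x : vec n :=
  [ffun q => if q \in l then \sum_(y <- take (index q l).+1 l) x y else x q].

Definition prefix_circ_seq e (l : seq 'I_n) : seq (seq (gate n)) :=
  if l is d :: _ then prefix_circ e (size l) (nth d l) else [::].

Lemma sum_take x (l : seq 'I_n) d k : (k <= size l)%N ->
  \sum_(y <- take k l) x y = \sum_(j < k) x (nth d l j).
Proof.
move=> kl; rewrite (big_nth d) size_take_min (minn_idPl kl) big_mkord.
by apply: eq_bigr => j _; rewrite nth_take.
Qed.

Lemma injective_below_nth (l : seq 'I_n) d : uniq l -> injective_below (size l) (nth d l).
Proof. by move=> u i j il jl /eqP; rewrite nth_uniq // => /eqP. Qed.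

Lemma run_prefix_circ_seq e (l : seq 'I_n) x : uniq l -> (size l <= 2 ^ e)%N ->
  run (prefix_circ_seq e l) x = prefix_sums l x.
Proof.
case: l => [|d l'] u sl; first by apply/ffunP => q; rewrite ffunE.
rewrite [prefix_circ_seq _ _]/prefix_circ_seq; set l := d :: l' in u sl *.
apply/ffunP => q; rewrite ffunE; case: ifP => ql.
  have il : (index q l < size l)%N by rewrite index_mem.
  have inj : injective_below (size l) (nth d l) by apply: injective_below_nth.
  rewrite -{1}(nth_index d ql) prefix_circ_spec //.
  by rewrite (@sum_take x l d (index q l).+1).
by rewrite prefix_circ_out // => i il; apply/eqP => e'; move: ql; rewrite -e' mem_nth.
Qed.

Lemma parallel_prefix_circ_seq e (l : seq 'I_n) : uniq l -> parallel_circ (prefix_circ_seq e l).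
Proof. by case: l => // d l' u; apply: parallel_prefix_circ; apply: injective_below_nth. Qed.

Lemma circ_qubits_prefix_circ_seq e (l : seq 'I_n) q :
  q \in circ_qubits (prefix_circ_seq e l) -> q \in l.
Proof. by case: l => // d l' /circ_qubits_prefix_circ [i il ->]; apply: mem_nth. Qed.

Lemma size_prefix_circ_seq e (l : seq 'I_n) : (size (prefix_circ_seq e l) <= e.*2)%N.
Proof. by case: l => //= d l'; apply: size_prefix_circ. Qed.

Lemma prefix_sums_rcons (s : seq 'I_n) (h : 'I_n) y q : uniq (rcons s h) ->
  prefix_sums (rcons s h) y q = if q == h then \sum_(z <- rcons s h) y z else prefix_sums s y q.
Proof.
rewrite rcons_uniq => /andP [hs us]; rewrite !ffunE mem_rcons inE.
case: eqP => [-> | qh] /=.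
  by rewrite take_oversize // -cats1 size_cat index_cat (negbTE hs) /= eqxx addn0 addn1.
case: ifP => // qs; rewrite -cats1 index_cat qs take_cat.
case: ltnP => // le_s.
have e : (index q s).+1 = size s by apply/eqP; rewrite -index_mem in qs; rewrite eqn_leq qs le_s.
by rewrite e subnn take0 cats0 take_size.
Qed.

Lemma prefix_sums_eq (s : seq 'I_n) y y' q :
  (forall z, z \in s -> y z = y' z) -> y q = y' q -> prefix_sums s y q = prefix_sums s y' q.
Proof.
move=> e eq; rewrite !ffunE; case: ifP => // qs.
by rewrite big_seq [in RHS]big_seq; apply: eq_bigr => z zs; apply: e; apply: mem_take zs.
Qed.

End PrefixSums.

Section Blocks.
Variable n : nat.
Implicit Types (x y : vec n) (q : 'I_n).

Definition block := ('I_n * seq 'I_n)%type.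
Implicit Types (b : block) (br : seq block).

Definition block_sum x b := x b.1 + \sum_(m <- b.2) x m.
Definition block_qubits br : seq 'I_n := flatten [seq b.1 :: b.2 | b <- br].
Definition heads br : seq 'I_n := map fst br.

(* Fan-in: the head receives the block sum.  Prefix sums over (members, head)
   put the block sum on the head; undoing the prefix sums over the members
   restores them. *)
Definition fanin_circ e b : seq (seq (gate n)) :=
  prefix_circ_seq e (rcons b.2 b.1) ++ rev (prefix_circ_seq e b.2).

Lemma sum_rcons x s h : \sum_(z <- rcons s h) x z = \sum_(z <- s) x z + x h.
Proof. by rewrite -cats1 big_cat big_seq1. Qed.

Lemma run_fanin_circ e b x q : uniq (b.1 :: b.2) -> (size b.2 < 2 ^ e)%N ->
  run (fanin_circ e b) x q = if q == b.1 then block_sum x b else x q.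
Proof.
case: b => h M /= /andP [hM uM] sM; rewrite /fanin_circ /= run_cat.
have uMh : uniq (rcons M h) by rewrite rcons_uniq hM.
rewrite run_prefix_circ_seq ?size_rcons //.
have sub : {subset circ_qubits (rev (prefix_circ_seq e M)) <= M}.
  by move=> r; rewrite circ_qubits_rev => /circ_qubits_prefix_circ_seq.
have [undo_out undo_in] := acts_on_sub (run_acts_on (rev (prefix_circ_seq e M))) sub.
case: (boolP (q \in M)) => qM.
  have -> : (q == h) = false by apply/eqP => e'; move: hM; rewrite -e' qM.
  rewrite (undo_in _ (prefix_sums M x)) //.
    by rewrite -(@run_prefix_circ_seq _ e) ?run_revK ?parallel_prefix_circ_seq // ltnW.
  move=> r rM; rewrite prefix_sums_rcons // (_ : (r == h) = false) //.
  by apply/eqP => e'; move: hM; rewrite -e' rM.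
rewrite undo_out // prefix_sums_rcons //.
case: ifP => _; first by rewrite sum_rcons /block_sum addrC.
by rewrite ffunE (negbTE qM).
Qed.

Lemma parallel_fanin_circ e b : uniq (b.1 :: b.2) -> parallel_circ (fanin_circ e b).
Proof.
case: b => h M /= /andP [hM uM].
rewrite /fanin_circ /parallel_circ all_cat -!/(parallel_circ _) parallel_circ_rev.
by rewrite !parallel_prefix_circ_seq // rcons_uniq hM.
Qed.

Lemma circ_qubits_fanin_circ e b q : q \in circ_qubits (fanin_circ e b) -> q \in b.1 :: b.2.
Proof.
case: b => h M; rewrite /fanin_circ circ_qubits_cat mem_cat circ_qubits_rev.
case/orP => /circ_qubits_prefix_circ_seq; first by rewrite mem_rcons.
by move=> qM; rewrite inE qM orbT.
Qed.

Lemma size_fanin_circ e b : (size (fanin_circ e b) <= e.*2.*2)%N.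
Proof.
rewrite /fanin_circ size_cat size_rev.
by have := size_prefix_circ_seq e (rcons b.2 b.1); have := size_prefix_circ_seq e b.2; lia.
Qed.

(* This is the action of a heavy path of a CNOT tree. *)
Fixpoint fanin_all br x : vec n :=
  if br is b :: br' then [ffun q => if q == b.1 then block_sum x b else fanin_all br' x q]
  else x.

Fixpoint chain_spec br x : vec n :=
  if br is b :: br' then
    [ffun q => if q == b.1 then \sum_(c <- br) block_sum x c else chain_spec br' x q]
  else x.

(* All fan-ins side by side: distinct blocks use distinct qubits. *)
Definition fanin_all_circ e br : seq (seq (gate n)) :=
  foldr (fun b acc => par_circ (fanin_circ e b) acc) [::] br.

(* Simultaneous fan-ins, then prefix sums over the heads taken bottom-up. *)
Definition chain_circ e br : seq (seq (gate n)) :=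
  fanin_all_circ e br ++ prefix_circ_seq e (rev (heads br)).

Lemma block_qubits_cons b br : block_qubits (b :: br) = b.1 :: b.2 ++ block_qubits br.
Proof. by []. Qed.

Lemma heads_block_qubits br q : q \in heads br -> q \in block_qubits br.
Proof.
elim: br => // b br IH; rewrite /= inE block_qubits_cons inE mem_cat.
by case/orP => [-> // | /IH ->]; rewrite !orbT.
Qed.

Lemma uniq_heads br : uniq (block_qubits br) -> uniq (heads br).
Proof.
elim: br => // b br IH; rewrite block_qubits_cons /= cat_uniq => /andP [hb /and3P [_ _ u]].
rewrite IH // andbT; apply: contra hb => /heads_block_qubits h.
by rewrite mem_cat h orbT.
Qed.

Lemma block_sum_eq x y b : (forall q, q \in b.1 :: b.2 -> x q = y q) ->
  block_sum x b = block_sum y b.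
Proof.
move=> e; rewrite /block_sum e ?inE ?eqxx //; congr (_ + _).
by rewrite big_seq [in RHS]big_seq; apply: eq_bigr => q qb; apply: e; rewrite inE qb orbT.
Qed.

Lemma fanin_all_acts_on br : acts_on (fanin_all br) (block_qubits br).
Proof.
elim: br => [|b br [out inside]]; first exact: acts_on_id.
split => [x q | x y e q qS].
  rewrite block_qubits_cons inE mem_cat negb_or => /andP [qb /norP [_ qr]].
  by rewrite ffunE (negbTE qb) out.
rewrite !ffunE; case: ifP => _.
  by apply: block_sum_eq => r rb; apply: e; rewrite block_qubits_cons -cat_cons mem_cat rb.
case: (boolP (q \in block_qubits br)) => qr.
  by apply: inside => // r rr; apply: e; rewrite block_qubits_cons inE mem_cat rr !orbT.
by rewrite !out // e.
Qed.

Lemma chain_spec_acts_on br : acts_on (chain_spec br) (block_qubits br).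
Proof.
elim: br => [|b br [out inside]]; first exact: acts_on_id.
split => [x q | x y e q qS].
  rewrite block_qubits_cons inE mem_cat negb_or => /andP [qb /norP [_ qr]].
  by rewrite ffunE (negbTE qb) out.
rewrite !ffunE; case: ifP => _.
  rewrite big_seq [in RHS]big_seq; apply: eq_bigr => c cb; apply: block_sum_eq => r rc.
  by apply: e; apply/flattenP; exists (c.1 :: c.2) => //; apply/mapP; exists c.
case: (boolP (q \in block_qubits br)) => qr.
  by apply: inside => // r rr; apply: e; rewrite block_qubits_cons inE mem_cat rr !orbT.
by rewrite !out // e.
Qed.

Lemma fanin_all_head br x c : uniq (heads br) -> c \in br -> fanin_all br x c.1 = block_sum x c.
Proof.
elim: br => //= b br IH /andP [bh uh]; rewrite inE => /orP [/eqP -> | cb].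
  by rewrite ffunE eqxx.
rewrite ffunE; case: ifP => [/eqP e | _]; last exact: IH.
by move: bh; rewrite -e; case/negP; apply/mapP; exists c.
Qed.

Lemma chain_spec_factor br x : uniq (block_qubits br) ->
  chain_spec br x = prefix_sums (rev (heads br)) (fanin_all br x).
Proof.
elim: br x => [|b br IH] x u; first by apply/ffunP => q; rewrite !ffunE.
have /= /andP [bh uh] := uniq_heads u.
move: u; rewrite block_qubits_cons cons_uniq cat_uniq => /andP [_ /and3P [_ _ ubr]].
apply/ffunP => q; rewrite /= rev_cons prefix_sums_rcons; last by rewrite rcons_uniq mem_rev bh rev_uniq.
rewrite ffunE; case: ifP => [/eqP qb | qb].
  rewrite sum_rcons big_cons addrC ffunE eqxx; congr (_ + _).
  rewrite big_rev big_map big_seq [in RHS]big_seq; apply: eq_bigr => c cb.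
  rewrite ffunE (_ : (c.1 == b.1) = false); first by rewrite fanin_all_head.
  by apply/eqP => e; move: bh; rewrite -e; case/negP; apply/mapP; exists c.
rewrite IH //; apply: prefix_sums_eq; last by rewrite ffunE qb.
move=> z; rewrite mem_rev => zh; rewrite ffunE (_ : (z == b.1) = false) //.
by apply/eqP => e; move: bh; rewrite -e zh.
Qed.

Lemma circ_qubits_fanin_all_circ e br q :
  q \in circ_qubits (fanin_all_circ e br) -> q \in block_qubits br.
Proof.
elim: br => //= b br IH; rewrite circ_qubits_par block_qubits_cons -cat_cons mem_cat.
by case/orP => [/circ_qubits_fanin_circ -> | /IH ->]; rewrite ?orbT.
Qed.

Lemma disjoint_fanin_circ e b br : uniq (block_qubits (b :: br)) ->
  disjoint_qubits (circ_qubits (fanin_circ e b)) (circ_qubits (fanin_all_circ e br)).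
Proof.
rewrite block_qubits_cons -cat_cons cat_uniq => /and3P [_ h _] q /circ_qubits_fanin_circ qb.
by apply/negP => /circ_qubits_fanin_all_circ qr; case/hasP: h; exists q.
Qed.

Lemma run_fanin_all_circ e br x : uniq (block_qubits br) -> (size (block_qubits br) <= 2 ^ e)%N ->
  run (fanin_all_circ e br) x = fanin_all br x.
Proof.
elim: br x => [|b br IH] x u sz //=.
rewrite run_par_circ; last exact: disjoint_fanin_circ.
move: (u) (sz); rewrite block_qubits_cons -cat_cons cat_uniq size_cat => /and3P [ub hb ubr] sz'.
have [out inside] := fanin_all_acts_on br.
have b1_out : b.1 \notin block_qubits br by apply: contra hb => bb; apply/hasP; exists b.1; rewrite ?inE ?eqxx.
rewrite IH //; last by move: sz'; lia.
apply/ffunP => q.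
have fanin_b r : run (fanin_circ e b) x r = if r == b.1 then block_sum x b else x r.
  by rewrite run_fanin_circ //; move: sz'; rewrite /=; lia.
rewrite ffunE; case: ifP => [/eqP -> | qb]; first by rewrite out // fanin_b eqxx.
case: (boolP (q \in block_qubits br)) => qr; last by rewrite !out // fanin_b qb.
apply: inside => // r rr; rewrite fanin_b; case: ifP => // /eqP rb.
by move: b1_out; rewrite -rb rr.
Qed.

Lemma parallel_fanin_all_circ e br : uniq (block_qubits br) -> parallel_circ (fanin_all_circ e br).
Proof.
elim: br => // b br IH u.
have [u1 u3] : uniq (b.1 :: b.2) /\ uniq (block_qubits br).
  by move: u; rewrite block_qubits_cons -cat_cons cat_uniq => /and3P [].
apply: parallel_par_circ; last exact: disjoint_fanin_circ.
  exact: parallel_fanin_circ.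
exact: IH.
Qed.

Lemma size_fanin_all_circ e br : (size (fanin_all_circ e br) <= e.*2.*2)%N.
Proof.
by elim: br => //= b br IH; rewrite size_par_circ geq_max IH andbT size_fanin_circ.
Qed.

Lemma run_chain_circ e br x : uniq (block_qubits br) -> (size (block_qubits br) <= 2 ^ e)%N ->
  run (chain_circ e br) x = chain_spec br x.
Proof.
move=> u sz; rewrite run_cat run_fanin_all_circ // run_prefix_circ_seq.
- by rewrite chain_spec_factor.
- by rewrite rev_uniq uniq_heads.
rewrite size_rev; apply: leq_trans sz; apply: uniq_leq_size; first exact: uniq_heads.
exact: heads_block_qubits.
Qed.

Lemma parallel_chain_circ e br : uniq (block_qubits br) -> parallel_circ (chain_circ e br).
Proof.
move=> u; rewrite /chain_circ /parallel_circ all_cat -!/(parallel_circ _).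
by rewrite parallel_fanin_all_circ // parallel_prefix_circ_seq // rev_uniq uniq_heads.
Qed.

Lemma circ_qubits_chain_circ e br q : q \in circ_qubits (chain_circ e br) -> q \in block_qubits br.
Proof.
rewrite circ_qubits_cat mem_cat => /orP [/circ_qubits_fanin_all_circ // | ].
by move/circ_qubits_prefix_circ_seq; rewrite mem_rev => /heads_block_qubits.
Qed.

Lemma size_chain_circ e br : (size (chain_circ e br) <= e * 6)%N.
Proof.
rewrite size_cat; have := size_fanin_all_circ e br.
by have := size_prefix_circ_seq e (rev (heads br)); lia.
Qed.

End Blocks.

Section HeavyPath.
Variable n : nat.
Implicit Types (x y : vec n) (q : 'I_n) (t : tree n) (br : seq (block n)).

(* Action of a CNOT tree on states: the postorder product of its gates; the
   gate of a node always targets the node's own qubit index. *)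
Fixpoint tree_run t x : vec n :=
  match t with
  | Leaf _ => x
  | Node LabL a b => apply_layer [:: (qidx b, qidx a)] (tree_run b (tree_run a x))
  | Node LabR a b => apply_layer [:: (qidx a, qidx b)] (tree_run b (tree_run a x))
  end.

Lemma qidx_leaves t : qidx t \in leaves t.
Proof. by elim: t => [l | [] a IHa b IHb] /=; rewrite ?inE // mem_cat ?IHa ?IHb ?orbT. Qed.

Lemma tree_run_acts_on t : acts_on (tree_run t) (leaves t).
Proof.
elim: t => [l | lab a IHa b IHb]; first exact: acts_on_id.
set S := leaves (Node lab a b).
have sub_a : {subset leaves a <= S} by move=> q qa; rewrite /S /= mem_cat qa.
have sub_b : {subset leaves b <= S} by move=> q qb; rewrite /S /= mem_cat qb orbT.
have qa : qidx a \in S by apply/sub_a/qidx_leaves.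
have qb : qidx b \in S by apply/sub_b/qidx_leaves.
have children := acts_on_comp (acts_on_sub IHb sub_b) (acts_on_sub IHa sub_a).
by case: lab @S sub_a sub_b qa qb children => S _ _ qa qb children;
  apply: (acts_on_comp (gate_acts_on _ _) children).
Qed.

Definition run_forest (offs : seq (tree n)) x : vec n := foldr tree_run x offs.

Definition add_member (z : 'I_n) br : seq (block n) :=
  if br is (h, M) :: r then (h, z :: M) :: r else [::].

(* The qubit [z] of a light child joins the chain: as a member of the first
   block if the node's gate targets the heavy side, as a new head otherwise. *)
Definition extend_chain (targets_heavy : bool) (z : 'I_n) br : seq (block n) :=
  if targets_heavy then add_member z br else (z, [::]) :: br.

(* Heavy-path decomposition: walking down to the child with more leaves,
   collect the light (off-path) subtrees and the chain of blocks formed by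
   the qubits of the light children along the path. *)
Fixpoint heavy_path t : seq (tree n) * seq (block n) :=
  match t with
  | Leaf l => ([::], [:: (l, [::])])
  | Node lab a b =>
    let a_heavy := (size (leaves b) <= size (leaves a))%N in
    let r := if a_heavy then heavy_path a else heavy_path b in
    let light := if a_heavy then b else a in
    let targets_heavy := if lab is LabL then a_heavy else ~~ a_heavy in
    (light :: r.1, extend_chain targets_heavy (qidx light) r.2)
  end.

Definition heavy_path_inv t (offs : seq (tree n)) br :=
  [/\ forall x, tree_run t x = chain_spec br (run_forest offs x),
      uniq (block_qubits br) /\ {subset block_qubits br <= leaves t},
      uniq (flatten (map (@leaves n) offs)) /\ {subset flatten (map (@leaves n) offs) <= leaves t},
      all (fun u : tree n => (size (leaves u)).*2 <= size (leaves t))%N offs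
    & exists M r, br = (qidx t, M) :: r].

Lemma chain_spec_add_member h M r (z : 'I_n) y : z \notin block_qubits ((h, M) :: r) ->
  apply_layer [:: (z, h)] (chain_spec ((h, M) :: r) y) = chain_spec ((h, z :: M) :: r) y.
Proof.
move=> zn; apply/ffunP => q; rewrite ffunE big_mkcond big_seq1 /=.
have -> : chain_spec ((h, M) :: r) y z = y z by case: (chain_spec_acts_on ((h, M) :: r)) => out _; apply: out.
case: (h =P q) => [<- | hq]; first by rewrite !ffunE eqxx !big_cons /block_sum /= big_cons; ring.
by rewrite addr0 !ffunE (_ : (q == h) = false) //; apply/eqP => e; apply: hq.
Qed.

Lemma chain_spec_new_head h M r (z : 'I_n) y : z \notin block_qubits ((h, M) :: r) ->
  apply_layer [:: (h, z)] (chain_spec ((h, M) :: r) y) = chain_spec ((z, [::]) :: (h, M) :: r) y.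
Proof.
move=> zn; apply/ffunP => q; rewrite ffunE big_mkcond big_seq1 /=.
have yz : chain_spec ((h, M) :: r) y z = y z.
  by case: (chain_spec_acts_on ((h, M) :: r)) => out _; apply: out.
case: (z =P q) => [<- | zq].
  by rewrite yz !ffunE !eqxx !big_cons /block_sum /= big_nil addr0; ring.
by rewrite addr0 [in RHS]ffunE (_ : (q == z) = false) //; apply/eqP => e; apply: zq.
Qed.

Lemma chain_spec_extend th h M r (z : 'I_n) y : z \notin block_qubits ((h, M) :: r) ->
  apply_layer [:: if th then (z, h) else (h, z)] (chain_spec ((h, M) :: r) y) =
  chain_spec (extend_chain th z ((h, M) :: r)) y.
Proof. by case: th => zn; [apply: chain_spec_add_member | apply: chain_spec_new_head]. Qed.

Lemma block_qubits_extend_chain th h M r (z : 'I_n) :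
  perm_eq (block_qubits (extend_chain th z ((h, M) :: r))) (z :: block_qubits ((h, M) :: r)).
Proof.
case: th => //; rewrite /extend_chain /add_member !block_qubits_cons cat_cons.
by apply/permP => p /=; rewrite addnCA.
Qed.

Lemma heavy_path_step t hv lt offs br (th : bool) :
  heavy_path_inv hv offs br -> uniq (leaves lt) -> disjoint_qubits (leaves hv) (leaves lt) ->
  {subset leaves hv <= leaves t} -> {subset leaves lt <= leaves t} ->
  size (leaves t) = (size (leaves hv) + size (leaves lt))%N ->
  (size (leaves lt) <= size (leaves hv))%N ->
  (forall x, tree_run t x = apply_layer [:: if th then (qidx lt, qidx hv) else (qidx hv, qidx lt)]
                              (tree_run lt (tree_run hv x))) ->
  qidx t = (if th then qidx hv else qidx lt) ->
  heavy_path_inv t (lt :: offs) (extend_chain th (qidx lt) br).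
Proof.
case=> run_hv [u_br sub_br] [u_offs sub_offs] half [M [r ebr]] u_lt D sub_hv sub_lt sz light ht qt.
subst br; have D' := disjoint_qubits_sym D.
have zn : qidx lt \notin block_qubits ((qidx hv, M) :: r).
  by apply: contra (D' _ (qidx_leaves lt)) => /sub_br.
have pe := block_qubits_extend_chain th (qidx hv) M r (qidx lt).
split.
- move=> x; rewrite ht run_hv -chain_spec_extend //; congr (apply_layer _ _).
  apply: acts_on_comm (tree_run_acts_on lt) (chain_spec_acts_on _) _.
  by move=> q /D' qh; apply: contra qh => /sub_br.
- rewrite (perm_uniq pe) /= zn; split => // q; rewrite (perm_mem pe) inE.
  by case/orP => [/eqP -> | /sub_br /sub_hv //]; apply/sub_lt/qidx_leaves.
- rewrite /= cat_uniq u_lt u_offs andbT; split.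
    by apply/hasPn => q /sub_offs /D qlt.
  by move=> q; rewrite mem_cat => /orP [/sub_lt | /sub_offs /sub_hv].
- rewrite /= sz; apply/andP; split; first lia.
  by apply: sub_all half => u; lia.
- by rewrite qt; case: th {ht qt pe}; [exists (qidx lt :: M), r | exists [::], ((qidx hv, M) :: r)].
Qed.

Lemma heavy_path_spec t : uniq (leaves t) -> heavy_path_inv t (heavy_path t).1 (heavy_path t).2.
Proof.
elim: t => [l | lab a IHa b IHb] u.
  split => //=.
  - move=> x; apply/ffunP => q; rewrite !ffunE; case: ifP => [/eqP -> | _] //.
    by rewrite big_seq1 /block_sum big_nil addr0.
  - by split => // q; rewrite /block_qubits /= !inE.
  - by exists [::], [::].
move: (u); rewrite /= cat_uniq => /and3P [ua hab ub].
have D : disjoint_qubits (leaves a) (leaves b) by move=> q qa; apply: contra hab => qb; apply/hasP; exists q.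
have sub_a : {subset leaves a <= leaves (Node lab a b)} by move=> q qa; rewrite /= mem_cat qa.
have sub_b : {subset leaves b <= leaves (Node lab a b)} by move=> q qb; rewrite /= mem_cat qb orbT.
have sz : size (leaves (Node lab a b)) = (size (leaves a) + size (leaves b))%N by rewrite /= size_cat.
have comm x : tree_run b (tree_run a x) = tree_run a (tree_run b x).
  by apply: acts_on_comm (tree_run_acts_on b) (tree_run_acts_on a) (disjoint_qubits_sym D).
case a_heavy : (size (leaves b) <= size (leaves a))%N; rewrite /=.
  have step := heavy_path_step (IHa ua) ub D sub_a sub_b sz a_heavy.
  by case: lab u step {sub_a sub_b sz} => _ step; apply: step.
have b_heavy : (size (leaves a) <= size (leaves b))%N by move: a_heavy; lia.
have step := heavy_path_step (IHb ub) ua (disjoint_qubits_sym D) sub_b sub_a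
  (etrans sz (addnC _ _)) b_heavy.
by case: lab u step {sub_a sub_b sz} => _ step; apply: step => // x; rewrite /= comm.
Qed.

End HeavyPath.

Section TreeCircuits.
Variable n : nat.
Implicit Types (t : tree n) (C : seq (seq (gate n))).

Definition realizes t B C :=
  [/\ parallel_circ C, {subset circ_qubits C <= leaves t}, (size C <= B)%N
    & forall x, run C x = tree_run t x].

Lemma realize_forest e B (offs : seq (tree n)) :
  (forall t, uniq (leaves t) -> (size (leaves t) <= 2 ^ e)%N -> exists C, realizes t B C) ->
  uniq (flatten (map (@leaves n) offs)) -> all (fun u : tree n => size (leaves u) <= 2 ^ e)%N offs ->
  exists C, [/\ parallel_circ C, {subset circ_qubits C <= flatten (map (@leaves n) offs)},
             (size C <= B)%N & forall x, run C x = run_forest offs x].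
Proof.
move=> realize_small; elim: offs => [|u us IH] /=; first by move=> _ _; exists [::]; split.
rewrite cat_uniq => /and3P [uu hu uus] /andP [su sus].
have [Cu [par_u sub_u size_u run_u]] := realize_small u uu su.
have [Cs [par_s sub_s size_s run_s]] := IH uus sus.
have D : disjoint_qubits (circ_qubits Cu) (circ_qubits Cs).
  by move=> q /sub_u qu; apply/negP => /sub_s qs; case/hasP: hu; exists q.
exists (par_circ Cu Cs); split.
- exact: parallel_par_circ.
- by move=> q; rewrite circ_qubits_par mem_cat => /orP [/sub_u -> | /sub_s ->]; rewrite ?orbT.
- by rewrite size_par_circ geq_max size_u size_s.
move=> x; rewrite run_par_circ //.
by rewrite (acts_on_comm _ (run_acts_on Cs) (run_acts_on Cu) (disjoint_qubits_sym D)) run_s run_u.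
Qed.

Lemma size_leaves_gt0 t : (0 < size (leaves t))%N.
Proof. by elim: t => //= _ a IHa b _; rewrite size_cat addn_gt0 IHa. Qed.

(* Main recursion: depth D(e) <= D(e-1) + 6e, i.e. D(e) <= 3e(e+1). *)
Lemma realize_tree e t : uniq (leaves t) -> (size (leaves t) <= 2 ^ e)%N ->
  exists C, realizes t (e * e.+1 * 3) C.
Proof.
elim: e t => [|e IH] t u sz.
  case: t u sz => [l | lab a b] u sz; first by exists [::]; split.
  by move: sz; rewrite /= size_cat expn0; have := size_leaves_gt0 a; have := size_leaves_gt0 b; lia.
have [run_t [u_br sub_br] [u_offs sub_offs] half _] := heavy_path_spec u.
have [Coffs [par_o sub_o size_o run_o]] : exists C,
    [/\ parallel_circ C, {subset circ_qubits C <= flatten (map (@leaves n) (heavy_path t).1)},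
        (size C <= e * e.+1 * 3)%N & forall x, run C x = run_forest (heavy_path t).1 x].
  apply: (realize_forest IH) => //.
  by apply: sub_all half => w; move: sz; rewrite expnS; lia.
have sz_br : (size (block_qubits (heavy_path t).2) <= 2 ^ e.+1)%N.
  by apply: leq_trans sz; apply: uniq_leq_size.
exists (Coffs ++ chain_circ e.+1 (heavy_path t).2); split.
- by rewrite /parallel_circ all_cat -!/(parallel_circ _) par_o parallel_chain_circ.
- by move=> q; rewrite circ_qubits_cat mem_cat => /orP [/sub_o /sub_offs | /circ_qubits_chain_circ /sub_br].
- by rewrite size_cat; have := size_chain_circ e.+1 (heavy_path t).2; move: size_o; nia.
- by move=> x; rewrite run_cat run_o run_chain_circ // run_t.
Qed.

End TreeCircuits.

Section Matrices.
Variable n : nat.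
Implicit Types (x : vec n) (L : seq (gate n)) (C : seq (seq (gate n))).

Definition colv x : 'M['F_2]_(n, 1) := \matrix_(i, j) x i.

Definition layer_mx L : 'M['F_2]_n := 1%:M + \sum_(g <- L) delta_mx g.2 g.1.

Lemma delta_mx_colv (a b : 'I_n) x i j : (delta_mx a b *m colv x) i j = if i == a then x b else 0.
Proof.
rewrite !mxE (bigD1 b) //= big1 => [|k kb]; rewrite !mxE.
  by rewrite eqxx andbT; case: (i == a); rewrite ?mul1r ?mul0r addr0.
by rewrite (negbTE kb) andbF mul0r.
Qed.

Lemma layer_mx_colv L x : layer_mx L *m colv x = colv (apply_layer L x).
Proof.
apply/matrixP => i j; rewrite /layer_mx mulmxDl mul1mx mulmx_suml !mxE ffunE summxE.
by congr (_ + _); rewrite [RHS]big_mkcond; apply: eq_bigr => g _; rewrite delta_mx_colv eq_sym.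
Qed.

Lemma colv_inj_mx (A B : 'M['F_2]_n) : (forall x, A *m colv x = B *m colv x) -> A = B.
Proof.
move=> h; apply/matrixP => i j.
have := congr1 (fun M : 'M['F_2]_(n, 1) => M i ord0) (h [ffun q => (q == j)%:R]) => /=.
rewrite !mxE (bigD1 j) //= [in RHS](bigD1 j) //= !big1 => [|k kj|k kj]; rewrite ?mxE ?ffunE.
- by rewrite eqxx !mulr1 !addr0.
- by rewrite (negbTE kj) mulr0.
- by rewrite (negbTE kj) mulr0.
Qed.

Lemma tree_mx_colv (t : tree n) x : tree_mx t *m colv x = colv (tree_run t x).
Proof.
have Rmx_layer (i j : 'I_n) : Rmx i j = layer_mx [:: (i, j)] by rewrite /layer_mx big_seq1.
elim: t x => [l | [] a IHa b IHb] x /=; first by rewrite mul1mx.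
- by rewrite -!mulmxA IHa IHb Rmx_layer layer_mx_colv.
- by rewrite -!mulmxA IHa IHb Rmx_layer layer_mx_colv.
Qed.

Lemma mxprod_cat (s1 s2 : seq 'M['F_2]_n) : mxprod (s1 ++ s2) = mxprod s1 *m mxprod s2.
Proof. by elim: s1 => [|A s1 IH] /=; rewrite ?mul1mx // /mxprod /= -/(mxprod _) IH mulmxA. Qed.

Definition circ_mxs C : seq 'M['F_2]_n := rev [seq layer_mx L | L <- C].

Lemma circ_mxs_colv C x : mxprod (circ_mxs C) *m colv x = colv (run C x).
Proof.
elim: C x => [|L C IH] x; first by rewrite /= mul1mx.
rewrite /circ_mxs /= rev_cons -cats1 mxprod_cat -/(circ_mxs C) -mulmxA /mxprod /= mulmx1.
by rewrite layer_mx_colv IH.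
Qed.

Lemma circ_mxs_parallel C P : parallel_circ C -> P \in circ_mxs C -> parallel_elim P.
Proof.
move=> par; rewrite mem_rev => /mapP [L LC ->]; exists L; split => //.
by move/allP: par => /(_ L LC).
Qed.

Lemma tree_product_parallel B (Ts : seq (tree n)) :
  (forall t : tree n, valid_tree t -> exists C, realizes t B C) ->
  all (@valid_tree n) Ts ->
  exists Ps : seq 'M['F_2]_n, [/\ (forall P, P \in Ps -> parallel_elim P),
     (size Ps <= size Ts * B)%N & mxprod [seq tree_mx T | T <- Ts] = mxprod Ps].
Proof.
move=> realize_valid; elim: Ts => [|T Ts IH] /=; first by exists [::]; split.
case/andP => vT vTs; have [Ps [par_Ps size_Ps prod_Ps]] := IH vTs.
have [C [par_C _ size_C run_C]] := realize_valid T vT.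
exists (circ_mxs C ++ Ps); split.
- by move=> P; rewrite mem_cat => /orP [/(circ_mxs_parallel par_C) | /par_Ps].
- by rewrite size_cat size_rev size_map mulSn; apply: leq_add.
rewrite mxprod_cat -prod_Ps /mxprod /= -/(mxprod _); congr (_ *m _).
by apply: colv_inj_mx => x; rewrite circ_mxs_colv tree_mx_colv run_C.
Qed.

End Matrices.

Local Close Scope ring_scope.
From Stdlib Require Import Reals Lra Psatz.

Lemma INR_expn2 k : INR (expn 2 k) = (2 ^ k)%R.
Proof. by elim: k => [|k IH] //=; rewrite expnS -multE mult_INR IH. Qed.

(* With e = up_log 2 n, the depth bound 3e(e+1) is at most 100 ln^2 n:
   2^(e-1) < n gives (e-1) ln 2 < ln n, and ln n >= ln 2 > 1/2. *)
Lemma depth_log_bound n : (2 <= n)%nat ->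
  (INR (up_log 2 n * (up_log 2 n).+1 * 3) <= 100 * ln (INR n) ^ 2)%R.
Proof.
move=> n2; set e := up_log 2 n.
have e_gt0 : (1 <= e)%nat by rewrite /e up_log_gt0 n2.
have ln2_le : (ln 2 <= ln (INR n))%R.
  have h2 : (2 <= INR n)%R by apply: (le_INR 2 n); apply/leP.
  case: (Rle_lt_or_eq_dec _ _ h2) => h; last by rewrite -h; lra.
  by apply: Rlt_le; apply: ln_increasing => //; lra.
have ln2_bounds := ln_lt_2.
have e_ln : (INR e.-1 * ln 2 < ln (INR n))%R.
  rewrite -ln_pow; last lra.
  apply: ln_increasing; first by apply: pow_lt; lra.
  by rewrite -(INR_expn2 e.-1); apply/lt_INR/ltP/up_log_gtn.
have eE : INR e = (INR e.-1 + 1)%R by rewrite -S_INR prednK.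
rewrite !mult_INR S_INR eE (_ : INR 3 = 3%R); last by rewrite /=; lra.
have f_ge0 : (0 <= INR e.-1)%R by apply: pos_INR.
set f := INR e.-1 in e_ln f_ge0 *; set l := ln (INR n) in ln2_le e_ln *.
have hf : (f < 2 * l)%R by nra.
have hl : (/ 2 < l)%R by lra.
nra.
Qed.

Theorem corollary3p6 :
  exists C : R, (0 < C)%R /\
    forall (n k : nat), (2 <= n)%N -> (1 <= k)%N ->
    forall (Ts : seq (tree n)),
      size Ts = k -> all (@valid_tree n) Ts ->
      (* M = M_{T_k} ... M_{T_1}, with Ts = [:: T_k; ...; T_1] *)
      exists Ps : seq 'M['F_2]_n,
        (forall P, P \in Ps -> parallel_elim P) /\
        (INR (size Ps) <= C * INR k * (ln (INR n)) ^ 2)%R /\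
        mxprod [seq tree_mx T | T <- Ts] = mxprod Ps.
Proof.
exists 100%R; split; first lra.
move=> n k n2 _ Ts <- valid_Ts.
set B := (up_log 2 n * (up_log 2 n).+1 * 3)%N.
have realize_valid (t : tree n) : valid_tree t -> exists C, realizes t B C.
  by case/andP => /eqP sz u; apply: realize_tree => //; rewrite sz; apply: up_logP.
have [Ps [par_Ps size_Ps prod_Ps]] := tree_product_parallel realize_valid valid_Ts.
exists Ps; split => //; split => //.
apply: Rle_trans (le_INR _ _ (elimT leP size_Ps)) _.
rewrite mult_INR; have := depth_log_bound n2; have := pos_INR (size Ts); rewrite -/B; nra.
Qed.
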